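(* $R^p(3)=\tfrac12$ and $R(4)=\tfrac13$.
   Context: A qubit POVM is a finite family $\{\Pi_i\}_{i=1}^n$ of positive semidefinite operators summing to $\mathbb{I}$; it simulates a family $\{M_{a|x}\}$ if $M_{a|x}=\sum_i p(a|x,i)\Pi_i$ with $p(a|x,i)\ge0$, $\sum_a p(a|x,i)=1$. $\mathcal{P}_r$ is the family of two-outcome POVMs $\{\tfrac12(\mathbb{I}\pm r\hat n\cdot\vec\sigma)\}$ over all unit $\hat n\in\mathbb{R}^3$, and $\mathcal{P}^p_r$ the subfamily with $\hat n=(n_x,0,n_z)$. $R(n)$ (resp. $R^p(n)$) is the supremum of $r$ such that some $n$-outcome qubit POVM simulates $\mathcal{P}_r$ (resp. $\mathcal{P}^p_r$). *)

From mathcomp Require Import all_boot all_order all_algebra.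
From mathcomp Require Import boolp classical_sets reals.
From mathcomp Require Import complex.
Set Implicit Arguments. Unset Strict Implicit. Unset Printing Implicit Defensive.
Import Order.TTheory GRing.Theory Num.Theory.
Local Open Scope ring_scope.
Local Open Scope complex_scope.
Local Open Scope classical_set_scope.

Section Qubit.
Variable R : realType.
Local Notation C := (R[i]).

Definition adj (A : 'M[C]_2) : 'M[C]_2 := \matrix_(i, j) (A j i)^*.

Definition psd (A : 'M[C]_2) : Prop :=
  adj A = A /\
  forall v : 'cV[C]_2, 0 <= ((\matrix_(i, j) (v j i)^* : 'rV[C]_2) *m A *m v) 0 0.

Definition sigma_x : 'M[C]_2 := \matrix_(i, j) (if i == j then 0 else 1).
Definition sigma_y : 'M[C]_2 :=
  \matrix_(i, j) (if i == j then 0 else if (i : nat) == 0%N then - 'i else 'i).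
Definition sigma_z : 'M[C]_2 :=
  \matrix_(i, j) (if i == j then (if (i : nat) == 0%N then 1 else -1) else 0).

Definition is_povm (n : nat) (Pi : 'I_n -> 'M[C]_2) : Prop :=
  (forall i, psd (Pi i)) /\ \sum_(i < n) Pi i = 1%:M.

(* the two-outcome POVM { 1/2 (I + s r n.sigma) }, a = true for '+', false for '-' *)
Definition noisy_meas (r nx ny nz : R) (a : bool) : 'M[C]_2 :=
  (1/2 : R)%:C *: (1%:M + (if a then 1 else -1) *: (r%:C *:
     (nx%:C *: sigma_x + ny%:C *: sigma_y + nz%:C *: sigma_z))).

Definition simulates_meas (n : nat) (Pi : 'I_n -> 'M[C]_2) (r nx ny nz : R) : Prop :=
  exists p : bool -> 'I_n -> R,
    (forall a i, 0 <= p a i) /\ (forall i, p true i + p false i = 1) /\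
    (forall a, noisy_meas r nx ny nz a = \sum_(i < n) (p a i)%:C *: Pi i).

Definition simulates_P (n : nat) (Pi : 'I_n -> 'M[C]_2) (r : R) : Prop :=
  forall nx ny nz : R, nx ^+ 2 + ny ^+ 2 + nz ^+ 2 = 1 ->
    simulates_meas Pi r nx ny nz.

Definition simulates_Pp (n : nat) (Pi : 'I_n -> 'M[C]_2) (r : R) : Prop :=
  forall nx nz : R, nx ^+ 2 + nz ^+ 2 = 1 ->
    simulates_meas Pi r nx 0 nz.

Definition Rsim (n : nat) : R :=
  sup [set r : R | exists Pi : 'I_n -> 'M[C]_2, is_povm Pi /\ simulates_P Pi r].

Definition Rpsim (n : nat) : R :=
  sup [set r : R | exists Pi : 'I_n -> 'M[C]_2, is_povm Pi /\ simulates_Pp Pi r].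

End Qubit.

From mathcomp Require Import all_boot all_order all_algebra.
From mathcomp Require Import classical_sets reals.
From mathcomp Require Import complex.
From mathcomp Require Import ring lra.
Set Implicit Arguments. Unset Strict Implicit. Unset Printing Implicit Defensive.
Import Order.TTheory GRing.Theory Num.Theory.
Local Open Scope ring_scope.

(* Write a qubit POVM element as a I + u.sigma with |u| <= a; the elements of a POVM
   satisfy sum a = 1 and sum u = 0, and simulating the measurement of direction n and
   sharpness r amounts to weights p in [0,1] with sum p a = 1/2 and sum p u = r n / 2.
   Take d + 1 outcomes and directions ranging over a d-dimensional space, and fix an
   outcome i.  The d pairs (a_k, u_k), k <> i, are orthogonal to a common nonzero vector
   of R^(1+d), which yields a unit n and a scalar lam with n.u_k = lam a_k for k <> i,
   hence n.u_i = - lam (1 - a_i).  Projecting the simulation of direction n onto n gives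
   r = lam (1 - 2 p_i), so r (1 - a_i) <= |n.u_i| <= a_i; summing over i, r d <= 1.
   The bound is attained by (1/m) (I + b_k.sigma) for the trine (d = 2, m = 3) and the
   tetrahedron (d = 3, m = 4), since these unit vectors form tight frames. *)

Lemma exists_nonzero_left_kernel (F : fieldType) m n (A : 'M[F]_(m, n)) :
  (n < m)%N -> exists2 w : 'rV_m, w != 0 & w *m A = 0.
Proof.
move=> lt_nm; have : kermx A != 0.
  rewrite kermx_eq0 -row_leq_rank -ltnNge.
  exact: leq_ltn_trans (rank_leq_col A) lt_nm.
case/matrix0Pn => i [j kerA_ij]; exists (row i (kermx A)).
  by apply/matrix0Pn; exists 0, j; rewrite mxE.
by rewrite -row_mul mulmx_ker row0.
Qed.

Definition vdot (R : pzRingType) d (n v : 'I_d -> R) : R := \sum_t n t * v t.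

Lemma vdot_sumr (R : comPzRingType) d I (s : seq I) (P : pred I) (n : 'I_d -> R)
    (c : I -> R) (v : I -> 'I_d -> R) :
  \sum_(j <- s | P j) c j * vdot n (v j) = vdot n (fun t => \sum_(j <- s | P j) c j * v j t).
Proof.
rewrite /vdot; under eq_bigr do rewrite mulr_sumr.
rewrite exchange_big /=; apply: eq_bigr => t _; rewrite mulr_sumr.
by apply: eq_bigr => j _; rewrite mulrCA.
Qed.

Lemma vdot_unit (R : comPzRingType) d (n : 'I_d -> R) (c : R) :
  \sum_t n t ^+ 2 = 1 -> vdot n (fun t => c * n t) = c.
Proof.
move=> n1; rewrite /vdot; under eq_bigr do rewrite mulrCA -expr2.
by rewrite -mulr_sumr n1 mulr1.
Qed.

Lemma unit_dot_proportional (R : rcfType) d (a : 'I_d -> R) (u : 'I_d -> 'I_d -> R) :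
  (forall k, a k = 0) \/
  exists n : 'I_d -> R, \sum_t n t ^+ 2 = 1 /\
    exists lam, forall k, vdot n (u k) = lam * a k.
Proof.
pose A : 'M[R]_(1 + d, d) := col_mx (\row_k a k) (\matrix_(t, k) u k t).
have [w w_neq0 wA0] := exists_nonzero_left_kernel A (ltnSn d).
pose l := lsubmx w 0 0; pose v t := rsubmx w 0 t.
have eq_k k : l * a k + vdot v (u k) = 0.
  move/matrixP: wA0 => /(_ 0 k); rewrite -[w]hsubmxK mul_row_col !mxE big_ord1 !mxE.
  move=> <-; congr (_ + _); first by rewrite /l mxE.
  by rewrite /vdot; apply: eq_bigr => t _; rewrite /v !mxE.
have [v0|] := eqVneq (\sum_t v t ^+ 2) 0.
  have {}v0 t : v t = 0.
    apply/eqP; rewrite -sqrf_eq0; apply/eqP.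
    exact: (psumr_eq0P (fun s _ => sqr_ge0 (v s)) v0).
  have l_neq0 : l != 0.
    apply: contraNneq w_neq0 => l0; rewrite -[w]hsubmxK.
    have -> : lsubmx w = 0 by apply/matrixP => x y; rewrite !ord1 [RHS]mxE -l0.
    have -> : rsubmx w = 0 by apply/matrixP => x y; rewrite ord1 [RHS]mxE; apply: v0.
    by rewrite row_mx0.
  left=> k; have := eq_k k; rewrite /vdot big1 ?addr0 => [/eqP|t _]; last by rewrite v0 mul0r.
  by rewrite mulf_eq0 (negbTE l_neq0) => /eqP.
set S := \sum_t _ => S_neq0; right.
have S_gt0 : 0 < S by rewrite lt0r S_neq0 sumr_ge0 // => t _; apply: sqr_ge0.
pose s := Num.sqrt S.
have s_neq0 : s != 0 by rewrite gt_eqF // sqrtr_gt0.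
exists (fun t => v t / s); split.
  by under eq_bigr do rewrite expr_div_n; rewrite -mulr_suml sqr_sqrtr ?ltW // divff.
exists (- l / s) => k; rewrite /vdot; under eq_bigr do rewrite mulrAC.
rewrite -mulr_suml -/(vdot v (u k)).
have -> : vdot v (u k) = - (l * a k) by apply/eqP; rewrite -addr_eq0 addrC eq_k.
by rewrite -mulNr mulrAC.
Qed.

Section SharpnessBound.
Variables (R : rcfType) (d : nat) (a : 'I_d.+1 -> R) (u : 'I_d.+1 -> 'I_d -> R) (r : R).
Hypothesis a_ge0 : forall j, 0 <= a j.
Hypothesis sum_a : \sum_j a j = 1.
Hypothesis sum_u : forall t, \sum_j u j t = 0.
Hypothesis dot_le : forall j (n : 'I_d -> R), \sum_t n t ^+ 2 = 1 -> `|vdot n (u j)| <= a j.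
Hypothesis simulable : forall n : 'I_d -> R, \sum_t n t ^+ 2 = 1 ->
  exists p : 'I_d.+1 -> R, [/\ forall j, 0 <= p j <= 1, \sum_j p j * a j = 1 / 2
                              & forall t, \sum_j p j * u j t = r / 2 * n t].

Lemma sharpness_mul_compl_le i : r * (1 - a i) <= a i.
Proof.
have sum_lift : \sum_(k < d) a (lift i k) = 1 - a i.
  by rewrite -sum_a (bigD1_ord i) //= addrC addrK.
have [a0|[n [n1 [lam dot_n]]]] :=
  unit_dot_proportional (fun k => a (lift i k)) (fun k => u (lift i k)).
  have : 1 - a i = 0 by rewrite -sum_lift big1.
  by have := a_ge0 i; nra.
have [p [p01 sum_pa sum_pu]] := simulable n1.
have dot_i : vdot n (u i) = - (lam * (1 - a i)).
  have : \sum_j 1 * vdot n (u j) = 0.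
    rewrite vdot_sumr /vdot big1 // => t _.
    by under eq_bigr do rewrite mul1r; rewrite sum_u mulr0.
  rewrite (bigD1_ord i) //=; under eq_bigr do rewrite mul1r dot_n.
  by rewrite -mulr_sumr sum_lift mul1r; lra.
have : \sum_j p j * vdot n (u j) = r / 2.
  rewrite vdot_sumr -(vdot_unit (r / 2) n1) /vdot.
  by apply: eq_bigr => t _; rewrite sum_pu.
rewrite (bigD1_ord i) //=; under eq_bigr do rewrite dot_n mulrCA.
move: sum_pa; rewrite (bigD1_ord i) //= -mulr_sumr dot_i => sum_pa r_half.
have := dot_le i n1; rewrite dot_i normrN ler_norml => /andP[lo hi].
have := p01 i => /andP[p0 p1].
have -> : r * (1 - a i) = lam * (1 - a i) * (1 - 2 * p i) by nra.
nra.
Qed.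

Lemma sharpness_bound : r * d%:R <= 1.
Proof.
have : \sum_i r * (1 - a i) <= \sum_i a i by apply: ler_sum => i _; apply: sharpness_mul_compl_le.
by rewrite sum_a -mulr_sumr sumrB sumr_const card_ord sum_a -[d.+1]addn1 mulrnDr addrK.
Qed.

End SharpnessBound.

Lemma sqr_dot3_le (R : realDomainType) (b1 b2 b3 n1 n2 n3 : R) :
  (b1 * n1 + b2 * n2 + b3 * n3) ^+ 2 <=
  (b1 ^+ 2 + b2 ^+ 2 + b3 ^+ 2) * (n1 ^+ 2 + n2 ^+ 2 + n3 ^+ 2).
Proof.
have -> : (b1 ^+ 2 + b2 ^+ 2 + b3 ^+ 2) * (n1 ^+ 2 + n2 ^+ 2 + n3 ^+ 2) =
    (b1 * n1 + b2 * n2 + b3 * n3) ^+ 2 + ((b1 * n2 - b2 * n1) ^+ 2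
      + (b1 * n3 - b3 * n1) ^+ 2 + (b2 * n3 - b3 * n2) ^+ 2) by ring.
by rewrite lerDl !addr_ge0 ?sqr_ge0.
Qed.

Lemma abs_dot3_le (R : realDomainType) (b1 b2 b3 n1 n2 n3 a c : R) :
  0 <= a -> 0 <= c -> b1 ^+ 2 + b2 ^+ 2 + b3 ^+ 2 <= a ^+ 2 ->
  n1 ^+ 2 + n2 ^+ 2 + n3 ^+ 2 <= c ^+ 2 -> `|b1 * n1 + b2 * n2 + b3 * n3| <= a * c.
Proof.
move=> a_ge0 c_ge0 b_le n_le.
rewrite -ler_sqr ?nnegrE ?mulr_ge0 // real_normK ?num_real // exprMn.
apply: le_trans (sqr_dot3_le _ _ _ _ _ _) _.
by apply: ler_pM; rewrite ?addr_ge0 ?sqr_ge0.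
Qed.

Lemma quad_form_ge0_discr (R : realFieldType) (A C D : R) :
  (forall s t, 0 <= A * s ^+ 2 - 2 * C * s * t + D * t ^+ 2) -> C ^+ 2 <= A * D.
Proof.
move=> form_ge0; have A_ge0 : 0 <= A by have := form_ge0 1 0; nra.
have [A0|A_neq0] := eqVneq A 0.
  have [->|C_neq0] := eqVneq C 0; first by rewrite expr0n A0 mul0r.
  have := form_ge0 ((D + 1) / (2 * C)) 1.
  by rewrite (_ : _ - _ + _ = -1) ?A0; [lra | field].
have := form_ge0 C A; have : 0 < A by rewrite lt0r A_neq0.
nra.
Qed.

Lemma sup_eq_max (R : realType) (E : set R) c :
  E c -> (forall x, E x -> x <= c) -> sup E = c.
Proof.
move=> Ec ubc; apply/le_anti/andP; split; first by apply: ge_sup; [exists c | ].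
by apply: ub_le_sup; first by exists c.
Qed.

Local Open Scope complex_scope.

Section Bloch.
Variable R : realType.
Local Notation C := (R[i]).

Definition bloch (a x y z : R) : 'M[C]_2 :=
  a%:C *: 1%:M + x%:C *: sigma_x R + y%:C *: sigma_y R + z%:C *: sigma_z R.

Ltac mx2_entrywise :=
  apply/matrixP; do 2!case=> [[|[|?]] ?] //; rewrite !mxE /=; simpc;
  try (apply/eqP; rewrite eq_complex /=; apply/andP; split; apply/eqP; ring).

Lemma blochE a x y z : bloch a x y z = \matrix_(i, j)
  (if (i : nat) == 0%N then if (j : nat) == 0%N then (a + z) +i* 0 else x -i* y
   else if (j : nat) == 0%N then x +i* y else (a - z) +i* 0).
Proof. by rewrite /bloch; mx2_entrywise. Qed.

Lemma blochD a x y z a' x' y' z' :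
  bloch a x y z + bloch a' x' y' z' = bloch (a + a') (x + x') (y + y') (z + z').
Proof. by rewrite !blochE; mx2_entrywise. Qed.

Lemma blochZ c a x y z : c%:C *: bloch a x y z = bloch (c * a) (c * x) (c * y) (c * z).
Proof. by rewrite !blochE; mx2_entrywise. Qed.

Lemma bloch0 : bloch 0 0 0 0 = 0.
Proof. by rewrite !blochE; mx2_entrywise. Qed.

Lemma bloch1 : bloch 1 0 0 0 = 1%:M.
Proof. by rewrite !blochE; mx2_entrywise. Qed.

Lemma adj_bloch a x y z : adj (bloch a x y z) = bloch a x y z.
Proof. by rewrite /adj !blochE; mx2_entrywise. Qed.

Lemma bloch_sum n (p a x y z : 'I_n -> R) :
  \sum_(k < n) (p k)%:C *: bloch (a k) (x k) (y k) (z k) =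
  bloch (\sum_k p k * a k) (\sum_k p k * x k) (\sum_k p k * y k) (\sum_k p k * z k).
Proof.
elim: n p a x y z => [|n IHn] p a x y z; first by rewrite !big_ord0 bloch0.
by rewrite !big_ord_recr /= IHn blochZ blochD.
Qed.

Lemma bloch_inj a x y z a' x' y' z' : bloch a x y z = bloch a' x' y' z' ->
  [/\ a = a', x = x', y = y' & z = z'].
Proof.
rewrite !blochE => /matrixP eqM.
have := eqM ord0 ord0; have := eqM ord_max ord_max; have := eqM ord0 ord_max.
by rewrite !mxE /= => -[? ?] [?] [?]; split; lra.
Qed.

Definition sgn (b : bool) : R := if b then 1 else -1.

Lemma noisy_measE r nx ny nz b : noisy_meas r nx ny nz b =
  bloch (1 / 2) (sgn b * r * nx / 2) (sgn b * r * ny / 2) (sgn b * r * nz / 2).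
Proof. by rewrite blochE /noisy_meas; case: b; mx2_entrywise. Qed.

Definition coef_I (M : 'M[C]_2) : R :=
  (complex.Re (M ord0 ord0) + complex.Re (M ord_max ord_max)) / 2.
Definition coef_X (M : 'M[C]_2) : R := complex.Re (M ord0 ord_max).
Definition coef_Y (M : 'M[C]_2) : R := - complex.Im (M ord0 ord_max).
Definition coef_Z (M : 'M[C]_2) : R :=
  (complex.Re (M ord0 ord0) - complex.Re (M ord_max ord_max)) / 2.

Lemma matrix2P (M N : 'M[C]_2) :
  M ord0 ord0 = N ord0 ord0 -> M ord0 ord_max = N ord0 ord_max ->
  M ord_max ord0 = N ord_max ord0 -> M ord_max ord_max = N ord_max ord_max -> M = N.
Proof.
move=> e00 e01 e10 e11; apply/matrixP => i j.
have ord2E (k : 'I_2) : k = ord0 \/ k = ord_max.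
  by case: k => [[|[|?]] ?] //; [left | right]; apply: val_inj.
by case: (ord2E i) => ->; case: (ord2E j) => ->.
Qed.

Lemma hermitian_blochE (M : 'M[C]_2) :
  adj M = M -> M = bloch (coef_I M) (coef_X M) (coef_Y M) (coef_Z M).
Proof.
move=> /matrixP hermM; have := hermM ord0 ord0; have := hermM ord_max ord_max.
have := hermM ord_max ord0; rewrite /adj !mxE /coef_I /coef_X /coef_Y /coef_Z blochE.
case E00 : (M ord0 ord0) => [p q]; case E11 : (M ord_max ord_max) => [p' q'].
case E01 : (M ord0 ord_max) => [s t]; case E10 : (M ord_max ord0) => [s' t'] /=.
move=> [e1 e2] [e3] [e4]; apply: matrix2P; rewrite mxE /= ?E00 ?E01 ?E10 ?E11;
  apply/eqP; rewrite eq_complex /=; apply/andP; split; apply/eqP; lra.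
Qed.

Definition cvec2 (c0 c1 : C) : 'cV[C]_2 := \col_i (if (i : nat) == 0%N then c0 else c1).

Lemma cvec2E (v : 'cV[C]_2) : v = cvec2 (v ord0 0) (v ord_max 0).
Proof.
by apply/matrixP; do 2!case=> [[|[|?]] ?] //; rewrite !mxE /= ?ord1; congr (v _ _); apply: val_inj.
Qed.

Definition bloch_expect (a x y z p0 q0 p1 q1 : R) : R :=
  a * (p0 ^+ 2 + q0 ^+ 2 + p1 ^+ 2 + q1 ^+ 2) + x * (2 * (p0 * p1 + q0 * q1))
  + y * (2 * (p0 * q1 - q0 * p1)) + z * (p0 ^+ 2 + q0 ^+ 2 - p1 ^+ 2 - q1 ^+ 2).

Lemma bloch_form a x y z p0 q0 p1 q1 :
  ((\matrix_(i, j) ((cvec2 (p0 +i* q0) (p1 +i* q1)) j i)^* : 'rV[C]_2)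
     *m bloch a x y z *m cvec2 (p0 +i* q0) (p1 +i* q1)) 0 0 =
  (bloch_expect a x y z p0 q0 p1 q1)%:C.
Proof.
rewrite blochE !mxE !big_ord_recr !big_ord0 /= !mxE !big_ord_recr !big_ord0 /= !mxE /=.
rewrite /bloch_expect; simpc.
by apply/eqP; rewrite eq_complex /=; apply/andP; split; apply/eqP; ring.
Qed.

Lemma psd_blochP a x y z :
  psd (bloch a x y z) <-> 0 <= a /\ x ^+ 2 + y ^+ 2 + z ^+ 2 <= a ^+ 2.
Proof.
split=> [[_ form_ge0] | [a_ge0 b_le]].
  have form p0 q0 p1 q1 : 0 <= bloch_expect a x y z p0 q0 p1 q1.
    by have := form_ge0 (cvec2 (p0 +i* q0) (p1 +i* q1)); rewrite bloch_form ler0c.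
  have az_ge0 : 0 <= a + z by have := form 1 0 0 0; rewrite /bloch_expect; lra.
  have az'_ge0 : 0 <= a - z by have := form 0 0 1 0; rewrite /bloch_expect; lra.
  (* On the vectors (s, - t (x + i y)) the form is a binary quadratic form in (s, t). *)
  have : (x ^+ 2 + y ^+ 2) ^+ 2 <= (a + z) * ((a - z) * (x ^+ 2 + y ^+ 2)).
    apply: quad_form_ge0_discr => s t.
    by have := form s 0 (- t * x) (- t * y); rewrite /bloch_expect; lra.
  move=> discr; split; first lra.
  have [B0|B_neq0] := eqVneq (x ^+ 2 + y ^+ 2) 0; first nra.
  have B_gt0 : 0 < x ^+ 2 + y ^+ 2 by rewrite lt0r B_neq0 addr_ge0 ?sqr_ge0.
  have : x ^+ 2 + y ^+ 2 <= (a + z) * (a - z).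
    by rewrite -(ler_pM2r B_gt0) -expr2 -mulrA.
  nra.
split; first exact: adj_bloch.
move=> v; rewrite (cvec2E v); case: (v ord0 0) => p0 q0; case: (v ord_max 0) => p1 q1.
rewrite bloch_form ler0c /bloch_expect.
(* (w1, w2, w3) is the Bloch vector of v; its length is the squared norm N of v. *)
pose N := p0 ^+ 2 + q0 ^+ 2 + p1 ^+ 2 + q1 ^+ 2.
pose w1 := 2 * (p0 * p1 + q0 * q1); pose w2 := 2 * (p0 * q1 - q0 * p1).
pose w3 := p0 ^+ 2 + q0 ^+ 2 - p1 ^+ 2 - q1 ^+ 2.
have N_ge0 : 0 <= N by rewrite !addr_ge0 ?sqr_ge0.
have w_le : w1 ^+ 2 + w2 ^+ 2 + w3 ^+ 2 <= N ^+ 2.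
  by rewrite le_eqVlt; apply/orP; left; apply/eqP; rewrite /w1 /w2 /w3 /N; ring.
have := abs_dot3_le a_ge0 N_ge0 b_le w_le; rewrite ler_norml /w1 /w2 /w3 /N.
lra.
Qed.

Lemma povm_bloch n (Pi : 'I_n -> 'M[C]_2) : is_povm Pi ->
  [/\ forall k, Pi k = bloch (coef_I (Pi k)) (coef_X (Pi k)) (coef_Y (Pi k)) (coef_Z (Pi k)),
      forall k, 0 <= coef_I (Pi k) /\
        coef_X (Pi k) ^+ 2 + coef_Y (Pi k) ^+ 2 + coef_Z (Pi k) ^+ 2 <= coef_I (Pi k) ^+ 2,
      \sum_k coef_I (Pi k) = 1
    & [/\ \sum_k coef_X (Pi k) = 0, \sum_k coef_Y (Pi k) = 0 & \sum_k coef_Z (Pi k) = 0]].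
Proof.
case=> Pi_psd sum_Pi; have Pi_bloch k := hermitian_blochE (Pi_psd k).1.
have : \sum_k 1%:C *: Pi k = bloch 1 0 0 0.
  by rewrite bloch1 -sum_Pi; apply: eq_bigr => k _; rewrite scale1r.
under eq_bigr do rewrite Pi_bloch.
rewrite bloch_sum => /bloch_inj; rewrite !(eq_bigr _ (fun k _ => mul1r _)).
by case=> sum_a sum_x sum_y sum_z; split=> // k; apply/psd_blochP; rewrite -Pi_bloch.
Qed.

Lemma simulates_meas_bloch n (Pi : 'I_n -> 'M[C]_2) a x y z r nx ny nz :
  (forall k, Pi k = bloch (a k) (x k) (y k) (z k)) -> simulates_meas Pi r nx ny nz ->
  exists p : 'I_n -> R, [/\ forall j, 0 <= p j <= 1, \sum_j p j * a j = 1 / 2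
    & [/\ \sum_j p j * x j = r / 2 * nx, \sum_j p j * y j = r / 2 * ny
        & \sum_j p j * z j = r / 2 * nz]].
Proof.
move=> Pi_bloch [p [p_ge0 [p_sum1 Pi_sim]]]; exists (p true).
have := Pi_sim true; under eq_bigr do rewrite Pi_bloch.
rewrite noisy_measE bloch_sum => /bloch_inj[<- <- <- <-]; split=> //.
  by move=> j; have := p_ge0 true j; have := p_ge0 false j; have := p_sum1 j; lra.
by split; rewrite /sgn; field.
Qed.

Lemma povm4_sharpness_le (Pi : 'I_4 -> 'M[C]_2) r :
  is_povm Pi -> simulates_P Pi r -> r * 3 <= 1.
Proof.
move=> Pi_povm Pi_sim; have [Pi_bloch Pi_psd sum_a [sum_x sum_y sum_z]] := povm_bloch Pi_povm.
pose u k (t : 'I_3) := nth 0 [:: coef_X (Pi k); coef_Y (Pi k); coef_Z (Pi k)] t.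
apply: (@sharpness_bound _ 3 (fun k => coef_I (Pi k)) u) => //.
- by move=> j; case: (Pi_psd j).
- by case=> [[|[|[|?]]] ?] //=.
- move=> j n; rewrite /vdot !big_ord_recr !big_ord0 /= !add0r => n_unit.
  have [a_ge0 b_le] := Pi_psd j.
  by rewrite -[coef_I _]mul1r; apply: abs_dot3_le; rewrite ?n_unit ?expr1n.
move=> n; rewrite !big_ord_recr !big_ord0 /= add0r => n_unit.
have [p [p01 sum_pa [sum_px sum_py sum_pz]]] :=
  simulates_meas_bloch Pi_bloch (Pi_sim _ _ _ n_unit).
exists p; split=> //.
by case=> [[|[|[|?]]] ?] //=; rewrite ?sum_px ?sum_py ?sum_pz; congr (_ * n _); apply: val_inj.
Qed.

Lemma povm3_planar_sharpness_le (Pi : 'I_3 -> 'M[C]_2) r :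
  is_povm Pi -> simulates_Pp Pi r -> r * 2 <= 1.
Proof.
move=> Pi_povm Pi_sim; have [Pi_bloch Pi_psd sum_a [sum_x _ sum_z]] := povm_bloch Pi_povm.
pose u k (t : 'I_2) := nth 0 [:: coef_X (Pi k); coef_Z (Pi k)] t.
apply: (@sharpness_bound _ 2 (fun k => coef_I (Pi k)) u) => //.
- by move=> j; case: (Pi_psd j).
- by case=> [[|[|?]] ?] //=.
- move=> j n; rewrite /vdot /u !big_ord_recr !big_ord0 /= !add0r.
  set n0 := n _; set n1 := n _ => n_unit; have [a_ge0 b_le] := Pi_psd j.
  have n_le : n0 ^+ 2 + 0 ^+ 2 + n1 ^+ 2 <= 1 ^+ 2 by lra.
  by have := abs_dot3_le ler01 a_ge0 n_le b_le; rewrite mul0r addr0 mul1r.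
move=> n; rewrite !big_ord_recr !big_ord0 /= add0r => n_unit.
have [p [p01 sum_pa [sum_px _ sum_pz]]] :=
  simulates_meas_bloch Pi_bloch (Pi_sim _ _ n_unit).
exists p; split=> //.
by case=> [[|[|?]] ?] //=; rewrite ?sum_px ?sum_pz; congr (_ * n _); apply: val_inj.
Qed.

Section Frame.
Variables (m : nat) (b1 b2 b3 : 'I_m -> R).
Hypothesis m_gt0 : (0 < m)%N.
Hypothesis b_unit : forall k, b1 k ^+ 2 + b2 k ^+ 2 + b3 k ^+ 2 = 1.
Hypotheses (sum_b1 : \sum_k b1 k = 0) (sum_b2 : \sum_k b2 k = 0) (sum_b3 : \sum_k b3 k = 0).

Definition frame_povm (k : 'I_m) : 'M[C]_2 :=
  bloch (1 / m%:R) (b1 k / m%:R) (b2 k / m%:R) (b3 k / m%:R).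

Let m_neq0 : m%:R != 0 :> R. Proof. by rewrite pnatr_eq0 -lt0n. Qed.

Lemma frame_povm_is_povm : is_povm frame_povm.
Proof.
split=> [k|].
  apply/psd_blochP; split; first by rewrite divr_ge0 ?ler0n.
  have -> : (b1 k / m%:R) ^+ 2 + (b2 k / m%:R) ^+ 2 + (b3 k / m%:R) ^+ 2 =
            (b1 k ^+ 2 + b2 k ^+ 2 + b3 k ^+ 2) / m%:R ^+ 2 by field.
  by rewrite b_unit expr_div_n expr1n.
rewrite -bloch1 -(eq_bigr _ (fun k _ => scale1r _)) bloch_sum.
have sum_frame (c : 'I_m -> R) : \sum_k c k = 0 -> \sum_k 1 * (c k / m%:R) = 0.
  by move=> c0; rewrite -mulr_sumr -mulr_suml c0 mul0r mulr0.
rewrite (sum_frame b1 sum_b1) (sum_frame b2 sum_b2) (sum_frame b3 sum_b3).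
by rewrite -mulr_sumr sumr_const card_ord !mul1r -[_ *+ m]mulr_natr mulVf.
Qed.

Lemma frame_povm_simulates r nx ny nz : nx ^+ 2 + ny ^+ 2 + nz ^+ 2 = 1 ->
  \sum_k (b1 k * nx + b2 k * ny + b3 k * nz) * b1 k = m%:R * r * nx ->
  \sum_k (b1 k * nx + b2 k * ny + b3 k * nz) * b2 k = m%:R * r * ny ->
  \sum_k (b1 k * nx + b2 k * ny + b3 k * nz) * b3 k = m%:R * r * nz ->
  simulates_meas frame_povm r nx ny nz.
Proof.
move=> n_unit frame_x frame_y frame_z.
pose t k := b1 k * nx + b2 k * ny + b3 k * nz.
have t_bound k : -1 <= t k <= 1.
  have b_le : b1 k ^+ 2 + b2 k ^+ 2 + b3 k ^+ 2 <= 1 ^+ 2 by rewrite b_unit expr1n.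
  have n_le : nx ^+ 2 + ny ^+ 2 + nz ^+ 2 <= 1 ^+ 2 by rewrite n_unit expr1n.
  by have := abs_dot3_le ler01 ler01 b_le n_le; rewrite mul1r ler_norml.
have sum_t : \sum_k t k * 1 = 0.
  rewrite /t; under eq_bigr do rewrite mulr1.
  by rewrite !big_split /= -!mulr_suml sum_b1 sum_b2 sum_b3 !mul0r !addr0.
exists (fun s k => (1 + sgn s * t k) / 2); split; [|split].
- by move=> s k; move: (t_bound k); case: s; rewrite /sgn; lra.
- by move=> k; rewrite /sgn; lra.
move=> s; rewrite noisy_measE bloch_sum.
have weight (c : 'I_m -> R) : \sum_k (1 + sgn s * t k) / 2 * (c k / m%:R) =
    (\sum_k c k + sgn s * \sum_k t k * c k) / (2 * m%:R).
  have wk k : (1 + sgn s * t k) / 2 * (c k / m%:R) = (c k + sgn s * (t k * c k)) / (2 * m%:R).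
    by field.
  by rewrite (eq_bigr _ (fun k _ => wk k)) -mulr_suml big_split /= -mulr_sumr.
rewrite (weight (fun=> 1)) (weight b1) (weight b2) (weight b3) sum_t frame_x frame_y frame_z.
have coef c : sgn s * r * c / 2 = (0 + sgn s * (m%:R * r * c)) / (2 * m%:R) by field.
have half : 1 / 2 = (m%:R + sgn s * 0) / (2 * m%:R) by field.
by rewrite sum_b1 sum_b2 sum_b3 sumr_const card_ord half (coef nx) (coef ny) (coef nz).
Qed.

End Frame.

Lemma trine_simulates_Pp : exists Pi : 'I_3 -> 'M[C]_2, is_povm Pi /\ simulates_Pp Pi 2^-1.
Proof.
have [s s2] : exists s : R, s ^+ 2 = 3 / 4.
  by exists (Num.sqrt 3 / 2); rewrite expr_div_n sqr_sqrtr //; field.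
pose b1 (k : 'I_3) := nth 0 [:: 0; s; - s] k.
pose b3 (k : 'I_3) := nth 0 [:: 1; - 2^-1; - 2^-1 : R] k.
have b_unit k : b1 k ^+ 2 + 0 ^+ 2 + b3 k ^+ 2 = 1.
  by case: k => [[|[|[|?]]] ?] //; rewrite /b1 /b3 /= ?sqrrN ?s2; field.
exists (frame_povm b1 (fun=> 0) b3); split.
  by apply: frame_povm_is_povm => //; rewrite /b1 /b3 !big_ord_recr big_ord0 /=; lra.
move=> nx nz n_unit; apply: frame_povm_simulates => //;
  rewrite /b1 /b3 ?big_ord_recr ?big_ord0 /=; try lra.
(* lra sees s^2 * nx as an atom, so it needs [s2] multiplied by nx. *)
by have := congr1 ( *%R^~ nx) s2 => /=; lra.
Qed.

Lemma tetrahedron_simulates_P :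
  exists Pi : 'I_4 -> 'M[C]_2, is_povm Pi /\ simulates_P Pi 3^-1.
Proof.
have [c c2] : exists c : R, c ^+ 2 = 1 / 3.
  by exists (Num.sqrt 3)^-1; rewrite exprVn sqr_sqrtr //; field.
pose b1 (k : 'I_4) := c * nth 0 [:: 1; 1; -1; -1] k.
pose b2 (k : 'I_4) := c * nth 0 [:: 1; -1; 1; -1] k.
pose b3 (k : 'I_4) := c * nth 0 [:: 1; -1; -1; 1] k.
have b_unit k : b1 k ^+ 2 + b2 k ^+ 2 + b3 k ^+ 2 = 1.
  by case: k => [[|[|[|[|?]]]] ?] //; rewrite /b1 /b2 /b3 /=; lra.
exists (frame_povm b1 b2 b3); split.
  by apply: frame_povm_is_povm => //; rewrite /b1 /b2 /b3 !big_ord_recr big_ord0 /=; lra.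
move=> nx ny nz n_unit; apply: frame_povm_simulates => //;
  rewrite /b1 /b2 /b3 ?big_ord_recr ?big_ord0 /=; try lra.
all: have := congr1 ( *%R^~ nx) c2; have := congr1 ( *%R^~ ny) c2.
all: by have := congr1 ( *%R^~ nz) c2 => /=; lra.
Qed.

End Bloch.

Local Close Scope complex_scope.

Theorem proposition3 (R : realType) :
  Rpsim R 3 = 2^-1 /\ Rsim R 4 = 3^-1.
Proof.
split; apply: sup_eq_max.
- exact: trine_simulates_Pp.
- by move=> r [Pi [Pi_povm Pi_sim]]; have := povm3_planar_sharpness_le Pi_povm Pi_sim; lra.
- exact: tetrahedron_simulates_P.
- by move=> r [Pi [Pi_povm Pi_sim]]; have := povm4_sharpness_le Pi_povm Pi_sim; lra.
Qed.
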